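(* Let $T$ be a decomposition tree of a distance-hereditary graph $G$, and let $v$ be an internal node of $T$ labeled $\oplus$ with left child $v_l$ and right child $v_r$, such that property (P) holds at $v_l$ and at $v_r$. Assume $\hat\alpha(v_r)>\hat\beta(v_l)$. Then $\hat\beta(v)=0$.
   Context: All graphs are finite, simple, undirected. For a graph $H$ and $S\subseteq V(H)$, $N_H[S]$ is $S$ together with all vertices adjacent to a vertex of $S$, and $H[S]$ is the induced subgraph. Graphs carry a ''twin set'': a single-vertex graph on $x$ has twin set $\{x\}$. For vertex-disjoint graphs $G_l,G_r$ with twin sets $TS(G_l),TS(G_r)$: the true twin operation $G_l\otimes G_r$ has vertex set $V(G_l)\cup V(G_r)$, edge set $E(G_l)\cup E(G_r)\cup\{uw: u\in TS(G_l), w\in TS(G_r)\}$ and twin set $TS(G_l)\cup TS(G_r)$; the false twin operation $G_l\odot G_r$ has vertex set $V(G_l)\cup V(G_r)$, edge set $E(G_l)\cup E(G_r)$, twin set $TS(G_l)\cup TS(G_r)$; the attachment operation $G_l\oplus G_r$ has the same vertex and edge sets as $G_l\otimes G_r$ and twin set $TS(G_l)$. A decomposition tree $T$ of $G$ is a rooted binary tree whose leaves are in bijection with $V(G)$, each internal node having a left and a right child and a label in $\{\otimes,\odot,\oplus\}$; for each node $v$ define $\hat G(v)$ and $\hat{TS}(v)$ recursively: for a leaf $x$, the single-vertex graph on $x$ with twin set $\{x\}$; for an internal node $v$ with label $\circ$ and children $v_l,v_r$, $\hat G(v)=\hat G(v_l)\circ\hat G(v_r)$ with the corresponding twin set; one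 requires $\hat G(\text{root})=G$. Then $\hat G(v)$ is the subgraph of $G$ induced by the set $\hat V(v)$ of leaves below $v$. For a node $u$ and $0\le k\le|\hat{TS}(u)|$, call $S\subseteq\hat V(u)$ $k$-feasible if $\hat V(u)\setminus\hat{TS}(u)\subseteq N_{\hat G(u)}[S]$ and there is $X\subseteq S\cap\hat{TS}(u)$ with $|X|=k$ such that $\hat G(u)[S\setminus X]$ has a perfect matching. $\hat\gamma_k(u)$ is the minimum size of a $k$-feasible set. $\hat{min}(u)=\min\{\hat\gamma_k(u):0\le k\le|\hat{TS}(u)|\}$, and $\hat\alpha(u)$, $\hat\beta(u)$ are the smallest and the largest $k$ with $\hat\gamma_k(u)=\hat{min}(u)$. Property (P) holds at $u$ if for every $0\le k\le|\hat{TS}(u)|$: $\hat\gamma_k(u)=\hat{min}(u)+\hat\alpha(u)-k$ when $k\le\hat\alpha(u)$; $\hat\gamma_k(u)=\hat{min}(u)+k-\hat\beta(u)$ when $k\ge\hat\beta(u)$; $\hat\gamma_k(u)=\hat{min}(u)$ when $\hat\alpha(u)<k<\hat\beta(u)$ and $k-\hat\alpha(u)$ is even; and $\hat\gamma_k(u)=\hat{min}(u)+1$ otherwise. *)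

From mathcomp Require Import all_boot.
Set Implicit Arguments.
Unset Strict Implicit.
Unset Printing Implicit Defensive.

(* Labels of internal nodes: true twin (otimes), false twin (odot),
   attachment (oplus). *)
Inductive dlabel := OTrue | OFalse | OAttach.

Inductive dtree (T : Type) :=
  | Leaf of T
  | Node of dlabel & dtree T & dtree T.
Arguments Leaf {T}.
Arguments Node {T}.

(* [subtree s t]: s is (the subtree rooted at) a node of t. *)
Inductive subtree (T : Type) : dtree T -> dtree T -> Prop :=
  | st_refl t : subtree t t
  | st_left s o l r : subtree s l -> subtree s (Node o l r)
  | st_right s o l r : subtree s r -> subtree s (Node o l r).

Section Defs.
Variable T : finType.

Fixpoint leaves (t : dtree T) : seq T :=
  match t with
  | Leaf x => [:: x]
  | Node _ l r => leaves l ++ leaves r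
  end.

Definition hatV (t : dtree T) : {set T} := [set x | x \in leaves t].

Fixpoint twins (t : dtree T) : {set T} :=
  match t with
  | Leaf x => [set x]
  | Node OAttach l _ => twins l
  | Node _ l r => twins l :|: twins r
  end.

Definition joins (o : dlabel) : bool := if o is OFalse then false else true.

Fixpoint tedge (t : dtree T) : rel T :=
  match t with
  | Leaf _ => fun _ _ => false
  | Node o l r => fun x y =>
      [|| tedge l x y, tedge r x y |
          joins o && (((x \in twins l) && (y \in twins r))
                      || ((y \in twins l) && (x \in twins r)))]
  end.

Definition decomp_tree (e : rel T) (t : dtree T) : Prop :=
  [/\ uniq (leaves t), (forall x, x \in leaves t) & (forall x y, e x y = tedge t x y)].

Definition has_walk (e : rel T) (A : {set T}) (u v : T) (n : nat) : bool :=
  [exists p : n.-tuple T, [&& path e u p, all (fun x => x \in A) p & last u p == v]].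

Definition distance_hereditary (e : rel T) : Prop :=
  forall (A : {set T}) (u v : T), u \in A -> v \in A ->
    (exists n, has_walk e A u v n) ->
    forall n, has_walk e setT u v n -> exists2 m, m <= n & has_walk e A u v m.

Definition has_pm (E : rel T) (A : {set T}) : bool :=
  [exists M : {set {set T}},
     [forall m in M, exists x, exists y,
        [&& x \in A, y \in A, x != y, E x y & m == [set x; y]]]
     && [forall x in A, #|[set m in M | x \in m]| == 1]].

Definition cnbh (t : dtree T) (S : {set T}) : {set T} :=
  [set x in hatV t | (x \in S) || [exists y in S, tedge t x y]].

Definition feasible (t : dtree T) (k : nat) (S : {set T}) : bool :=
  [&& S \subset hatV t, hatV t :\: twins t \subset cnbh t S &
      [exists X : {set T}, [&& X \subset S :&: twins t, #|X| == k &
                               has_pm (tedge t) (S :\: X)]]].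

(* \hat\gamma_k(u): minimum size of a k-feasible set
   (#|T|.+1 plays the role of +infinity; k-feasible sets always exist
   for 0 <= k <= |TS(u)|, so this default is never attained there). *)
Definition gamma (t : dtree T) (k : nat) : nat :=
  \big[minn/#|T|.+1]_(S : {set T} | feasible t k S) #|S|.

Definition tsize (t : dtree T) : nat := #|twins t|.

Definition hmin (t : dtree T) : nat :=
  \big[minn/#|T|.+1]_(k < (tsize t).+1) gamma t k.

Definition halpha (t : dtree T) : nat :=
  \big[minn/tsize t]_(k < (tsize t).+1 | gamma t k == hmin t) (k : nat).

Definition hbeta (t : dtree T) : nat :=
  \max_(k < (tsize t).+1 | gamma t k == hmin t) (k : nat).

Definition propP (t : dtree T) : Prop :=
  forall k, k <= tsize t ->
  [/\ k <= halpha t -> gamma t k = hmin t + (halpha t - k),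
      hbeta t <= k -> gamma t k = hmin t + (k - hbeta t),
      halpha t < k < hbeta t -> ~~ odd (k - halpha t) -> gamma t k = hmin t
    & halpha t < k < hbeta t -> odd (k - halpha t) -> gamma t k = (hmin t).+1].

End Defs.

(* At an attachment node v = l (+) r the twins of r stop being twins and become
   adjacent to all twins of l.  Hence a k-feasible set of v splits into a
   (k + c)-feasible set of l and a c-feasible set of r, where c counts the
   matching edges between r and l; conversely, for 0 < j and c <= j, a
   j-feasible set of l and a c-feasible set of r combine into a (j - c)-feasible
   set of v by matching the c unmatched twins of r with c of the j unmatched
   twins of l.  Split an optimal k-feasible set of v, k > 0.  If c < alpha(r),
   property (P) at r gives gamma_r(c + 1) < gamma_r(c); otherwise
   k + c > beta(l) and (P) at l gives gamma_l(k + c - 1) < gamma_l(k + c).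
   Recombining yields gamma_v(k - 1) < gamma_v(k) in both cases, so the minimum
   of gamma_v is attained only at k = 0. *)

From Pilot Require Import Defs.
From mathcomp Require Import all_boot all_order zify.
Set Implicit Arguments. Unset Strict Implicit. Unset Printing Implicit Defensive.
Import Order.TTheory.

Section Matchings.
Variable T : finType.
Implicit Types (E : rel T) (A B C X Y : {set T}) (p : T -> T).

Lemma cardsU_disjoint A B : [disjoint A & B] -> #|A :|: B| = #|A| + #|B|.
Proof. by move=> dAB; rewrite -cardsUI (disjoint_setI0 dAB) cards0 addn0. Qed.

Definition pm_invol E A p := forall x, x \in A ->
  [/\ p x \in A, p x != x, p (p x) = x & E x (p x)].

Lemma has_pmP E A : symmetric E -> reflect (exists p, pm_invol E A p) (has_pm E A).
Proof.
move=> symE; apply: (iffP existsP) => [[M /andP[/forall_inP blockM /forall_inP coverM]]|[p pmp]].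
  have unique_block x m1 m2 : x \in A -> m1 \in M -> m2 \in M -> x \in m1 -> x \in m2 -> m1 = m2.
    move=> xA m1M m2M xm1 xm2; have /cards1P[m0 blocks_x] := coverM x xA.
    have /set1P-> : m1 \in [set m0] by rewrite -blocks_x inE m1M.
    by have /set1P-> : m2 \in [set m0] by rewrite -blocks_x inE m2M.
  have partner x y : x \in A -> [set x; y] \in M -> [/\ y \in A, y != x & E x y].
    move=> xA /[dup] xyM /blockM/existsP[a /existsP[b /and5P[aA bA ab Eab /eqP xy_ab]]].
    have : x \in [set a; b] /\ y \in [set a; b] by rewrite -xy_ab !inE !eqxx orbT.
    rewrite !inE => -[] /orP[]/eqP ? /orP[]/eqP ?; subst x y.
    + by move/setP/(_ b): xy_ab; rewrite !inE eqxx orbT orbb eq_sym (negbTE ab).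
    + by rewrite bA eq_sym ab.
    + by rewrite aA ab symE.
    + by move/setP/(_ a): xy_ab; rewrite !inE eqxx orbb (negbTE ab).
  have exists_partner x : x \in A -> exists y, [set x; y] \in M.
    move=> xA; have /cards1P[m blocks_x] := coverM x xA.
    have := set11 m; rewrite -blocks_x inE => /andP[/[dup] mM /blockM].
    case/existsP=> a /existsP[b /and5P[_ _ _ _ /eqP mab]]; rewrite mab in mM *.
    by rewrite !inE => /orP[]/eqP->; [exists b | exists a; rewrite setUC].
  pose p x := odflt x [pick y | [set x; y] \in M].
  have pP x : x \in A -> [set x; p x] \in M.
    by move=> /exists_partner[y xyM]; rewrite /p; case: pickP => [z|/(_ y)] /=; rewrite ?xyM.
  exists p => x xA; have [pxA pxx Expx] := partner _ _ xA (pP x xA); split=> //.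
  have [_ ppxx _] := partner _ _ pxA (pP _ pxA).
  have := set22 (p x) (p (p x)).
  rewrite (unique_block (p x) _ _ pxA (pP _ pxA) (pP _ xA) (set21 _ _) (set22 _ _)).
  by rewrite !inE => /orP[]/eqP// ppx; rewrite ppx eqxx in ppxx.
exists [set [set x; p x] | x in A]; apply/andP; split.
  apply/forall_inP=> _ /imsetP[x xA ->]; have [pxA pxx _ Expx] := pmp x xA.
  by apply/existsP; exists x; apply/existsP; exists (p x); rewrite xA pxA eq_sym pxx Expx eqxx.
apply/forall_inP=> x xA; have [_ _ ppx _] := pmp x xA.
apply/cards1P; exists [set x; p x]; apply/setP=> m; rewrite !inE.
apply/andP/eqP=> [[/imsetP[z zA ->]]|->]; last by split; [apply/imsetP; exists x|rewrite set21].
have [_ _ ppz _] := pmp z zA.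
by rewrite !inE => /orP[]/eqP->; rewrite // ppz setUC.
Qed.

Lemma pm_invol0 E p : pm_invol E set0 p.
Proof. by move=> x; rewrite inE. Qed.

Lemma pm_invol_mono E E' A p : {in A &, subrel E E'} -> pm_invol E A p -> pm_invol E' A p.
Proof. by move=> EE' pmp x xA; have [pxA ? ? /EE'] := pmp x xA; split; auto. Qed.

Lemma pm_involU E A B p q : [disjoint A & B] -> pm_invol E A p -> pm_invol E B q ->
  pm_invol E (A :|: B) (fun x => if x \in A then p x else q x).
Proof.
move=> dAB pmp pmq x; rewrite inE; case: ifP => [xA _ | /negbT xA xB].
  by have [pxA ? -> ?] := pmp x xA; rewrite pxA inE pxA.
have [qxB ? qqx ?] := pmq x xB.
by rewrite (disjointFl dAB qxB) qqx inE qxB orbT.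
Qed.

Lemma pm_invol_pair E a b : symmetric E -> a != b -> E a b ->
  pm_invol E [set a; b] (fun x => if x == a then b else a).
Proof.
move=> symE ab Eab x; have ba : (b == a) = false by rewrite eq_sym (negbTE ab).
by rewrite !inE => /orP[]/eqP->; rewrite ?ba !eqxx ?ba ?orbT; split; rewrite // symE.
Qed.

Lemma pm_invol_bipartite E Y X : symmetric E -> [disjoint Y & X] -> #|Y| <= #|X| ->
  {in Y & X, forall y x, E y x} ->
  exists2 Z : {set T}, Z \subset X /\ #|Z| = #|Y| & exists p, pm_invol E (Y :|: Z) p.
Proof.
move=> symE; move cardY: #|Y| => n; elim: n Y X cardY => [|n IHn] Y X cardY dYX leYX EYX.
  exists set0; first by rewrite sub0set cards0.
  by exists id; move/cards0_eq: cardY => ->; rewrite setU0; apply: pm_invol0.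
have [y yY] : exists y, y \in Y by apply/card_gt0P; rewrite cardY.
have [x xX] : exists x, x \in X by apply/card_gt0P; rewrite (leq_trans _ leYX).
have cardY' : #|Y :\ y| = n by move: cardY; rewrite (cardsD1 y) yY => -[].
have dYX' : [disjoint Y :\ y & X :\ x].
  exact: disjointWl (subsetDl _ _) (disjointWr (subsetDl _ _) dYX).
have leYX' : n <= #|X :\ x| by move: leYX; rewrite (cardsD1 x) xX.
have EYX' : {in Y :\ y & X :\ x, forall y x, E y x}.
  by move=> y' x' /setD1P[_ y'Y] /setD1P[_ x'X]; apply: EYX.
have [Z [ZX cardZ] [p pmp]] := IHn _ _ cardY' dYX' leYX' EYX'.
have xZ : x \notin Z by apply: contraTN xX => /(subsetP ZX); rewrite !inE eqxx.
have yZ : y \notin Z.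
  by apply: contraTN yY => /(subsetP ZX)/setD1P[_ yX]; rewrite (disjointFl dYX yX).
have xY : x \notin Y by apply: contraTN xX => xY; rewrite (disjointFr dYX xY).
exists (x |: Z).
  split; first by rewrite subUset sub1set xX (subset_trans ZX (subsetDl _ _)).
  by rewrite cardsU1 xZ cardZ.
have -> : Y :|: (x |: Z) = [set y; x] :|: ((Y :\ y) :|: Z).
  apply/setP=> w; rewrite !inE; case: (w =P y) => [->|_]; first by rewrite yY.
  by rewrite orbCA.
eexists; apply: pm_involU (pm_invol_pair _ _ _) pmp => //.
- rewrite disjoint_subset; apply/subsetP=> w; rewrite !inE => /orP[]/eqP->.
    by rewrite eqxx (negbTE yZ).
  by rewrite (negbTE xY) (negbTE xZ) andbF.
- by apply: contraTneq xX => <-; rewrite (disjointFr dYX yY).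
- exact: EYX.
Qed.

Lemma pm_invol_restrict E E' A B p : {in B &, subrel E E'} ->
  pm_invol E A p -> pm_invol E' [set x in A :&: B | p x \in B] p.
Proof.
move=> EE' pmp x; rewrite !inE => /andP[/andP[xA xB] pxB].
have [pxA pxx ppx Expx] := pmp x xA.
by rewrite pxA pxB ppx xB; split=> //; apply: EE'.
Qed.

Section Crossing.
Variables (E : rel T) (A B C : {set T}) (p : T -> T).
Hypotheses (pmp : pm_invol E A p) (sABC : A \subset B :|: C) (dBC : [disjoint B & C]).

Let Y := [set y in A :&: C | p y \in B].

Let pm_in_B x : x \in A -> (p x \in B) = (p x \notin C).
Proof.
move=> xA; have [pxA _ _ _] := pmp xA.
have /setUP[pxB|pxC] := subsetP sABC _ pxA.
  by rewrite pxB (disjointFr dBC pxB).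
by rewrite pxC (disjointFl dBC pxC).
Qed.

Lemma card_pm_cross : #|p @: Y| = #|Y|.
Proof.
apply: card_in_imset => y1 y2; rewrite !inE => /andP[/andP[y1A _] _] /andP[/andP[y2A _] _].
move=> p12; have [_ _ pp1 _] := pmp y1A; have [_ _ pp2 _] := pmp y2A.
by rewrite -pp1 p12 pp2.
Qed.

Lemma pm_cross_l : (A :&: B) :\: p @: Y = [set x in A :&: B | p x \in B].
Proof.
apply/setP=> x; rewrite !inE; case/boolP: (x \in A) => xA; rewrite ?andbF //=.
case/boolP: (x \in B) => xB; rewrite ?andbF //=.
have [pxA _ ppx _] := pmp xA.
have -> : (x \in p @: Y) = (p x \in C).
  apply/imsetP/idP => [[y] | pxC]; last by exists (p x); rewrite // !inE pxA pxC ppx xB.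
  by rewrite !inE => /andP[/andP[yA yC] _] ->; have [_ _ -> _] := pmp yA.
by rewrite andbT pm_in_B.
Qed.

Lemma pm_cross_r : (A :&: C) :\: Y = [set x in A :&: C | p x \in C].
Proof.
apply/setP=> x; rewrite !inE; case/boolP: (x \in A) => xA; rewrite ?andbF //=.
by case/boolP: (x \in C) => xC; rewrite ?andbF //= andbT pm_in_B // negbK.
Qed.

End Crossing.

End Matchings.

Section DecompositionTrees.
Variable T : finType.
Implicit Types (t l r : dtree T) (S X : {set T}).

Lemma hatV_node o l r : hatV (Node o l r) = hatV l :|: hatV r.
Proof. by apply/setP=> x; rewrite !inE mem_cat. Qed.

Lemma twins_subset t : twins t \subset hatV t.
Proof.
elim: t => [x|[] l IHl r IHr] /=; rewrite ?hatV_node ?setUSS //.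
  by rewrite sub1set inE mem_head.
exact: subset_trans IHl (subsetUl _ _).
Qed.

Lemma tedge_sym t : symmetric (tedge t).
Proof. by elim: t => [//|o l IHl r IHr] x y /=; rewrite IHl IHr [X in joins o && X]orbC. Qed.

Lemma tedge_hatV t x y : tedge t x y -> (x \in hatV t) && (y \in hatV t).
Proof.
elim: t x y => [//|o l IHl r IHr] x y /=; rewrite hatV_node !in_setU.
case/or3P=> [/IHl/andP[-> ->] // | /IHr/andP[-> ->] | /andP[_ /orP[]/andP[xT yT]]].
- by rewrite !orbT.
- by rewrite (subsetP (twins_subset l) x) ?(subsetP (twins_subset r) y) ?orbT.
- by rewrite (subsetP (twins_subset l) y) ?(subsetP (twins_subset r) x) ?orbT.
Qed.

Lemma tedge_node_l o l r x y : tedge l x y -> tedge (Node o l r) x y.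
Proof. by move=> /= ->. Qed.

Lemma tedge_node_r o l r x y : tedge r x y -> tedge (Node o l r) x y.
Proof. by move=> /= ->; rewrite orbT. Qed.

Lemma uniq_subtree s t : subtree s t -> uniq (leaves t) -> uniq (leaves s).
Proof. by elim=> // {}s o l r _ IH /=; rewrite cat_uniq => /and3P[]; auto. Qed.

Lemma uniq_node o l r : uniq (leaves (Node o l r)) ->
  [/\ uniq (leaves l), uniq (leaves r) & [disjoint hatV l & hatV r]].
Proof.
rewrite /= cat_uniq => /and3P[ul /hasPn lr ur]; split=> //.
rewrite disjoint_subset; apply/subsetP=> x; rewrite !inE; apply: contraL; exact: lr.
Qed.

Definition dominates t S :=
  forall x, x \in hatV t :\: twins t -> x \in S \/ exists2 y, y \in S & tedge t x y.

Lemma dominatesS t S S' : S \subset S' -> dominates t S -> dominates t S'.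
Proof.
move=> /subsetP sSS' domS x /domS[xS|[y yS xy]]; first by left; apply: sSS'.
by right; exists y => //; apply: sSS'.
Qed.

Lemma feasibleP t k S : reflect
  [/\ S \subset hatV t, dominates t S &
      exists X, [/\ X \subset S :&: twins t, #|X| = k & exists p, pm_invol (tedge t) (S :\: X) p]]
  (feasible t k S).
Proof.
apply: (iffP and3P) => [[sS /subsetP domS /existsP[X /and3P[sX /eqP cardX pmX]]]
                      | [sS domS [X [sX cardX pmX]]]].
  split=> //; last by exists X; split=> //; apply/(has_pmP _ (tedge_sym t)).
  move=> x /domS; rewrite inE => /andP[_ /orP[xS | /exists_inP[y yS xy]]]; first by left.
  by right; exists y.
split=> //; last first.
  by apply/existsP; exists X; rewrite sX cardX eqxx; apply/(has_pmP _ (tedge_sym t)).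
apply/subsetP=> x /[dup] /setDP[xV _] /domS[xS|[y yS xy]]; rewrite inE xV ?xS //=.
by apply/orP; right; apply/exists_inP; exists y.
Qed.

Lemma feasible_le_tsize t k S : feasible t k S -> k <= Defs.tsize t.
Proof.
by case/feasibleP=> _ _ [X [sX <- _]]; apply/subset_leq_card/(subset_trans sX)/subsetIr.
Qed.

Lemma gamma_le t k S : feasible t k S -> gamma t k <= #|S|.
Proof. by move=> fS; rewrite /gamma -minEnat -leEnat; apply: bigmin_le_cond. Qed.

Lemma gamma_ub t k : gamma t k <= #|T|.+1.
Proof. by rewrite /gamma -minEnat -leEnat; apply: bigmin_le_id. Qed.

Lemma gamma_witness t k : gamma t k <= #|T| -> exists2 S, feasible t k S & #|S| = gamma t k.
Proof.
rewrite /gamma -minEnat; case: (pickP (feasible t k)) => [S0 fS0 _ | nofeas].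
  have [S fS ->] := eq_bigmin S0 _ (fun S => #|S|) fS0 (fun S _ => leqW (max_card S)).
  by exists S.
by rewrite big_pred0 ?ltnn.
Qed.

Lemma hmin_le_gamma t k : k <= Defs.tsize t -> hmin t <= gamma t k.
Proof. by rewrite -ltnS => ltk; rewrite /hmin -minEnat -leEnat (bigmin_le _ (Ordinal ltk)). Qed.

Lemma halpha_le_tsize t : halpha t <= Defs.tsize t.
Proof. by rewrite /halpha -minEnat -leEnat; apply: bigmin_le_id. Qed.

Lemma twins_twin o l r : o <> OAttach -> twins (Node o l r) = twins l :|: twins r.
Proof. by case: o. Qed.

Section Children.
Variables l r : dtree T.
Hypothesis dlr : [disjoint hatV l & hatV r].

Lemma dominates_twin o S : o <> OAttach -> dominates l S -> dominates r S ->
  dominates (Node o l r) S.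
Proof.
move=> o_twin domSl domSr x; rewrite hatV_node twins_twin // in_setD !in_setU negb_or.
case/andP=> /andP[xTl xTr] /orP[xl|xr].
  have /domSl[xS|[y yS xy]] : x \in hatV l :\: twins l by rewrite in_setD xTl.
    by left.
  by right; exists y; last exact: tedge_node_l.
have /domSr[xS|[y yS xy]] : x \in hatV r :\: twins r by rewrite in_setD xTr.
  by left.
by right; exists y; last exact: tedge_node_r.
Qed.

Lemma feasible_twin o kl kr Sl Sr : o <> OAttach ->
  feasible l kl Sl -> feasible r kr Sr -> feasible (Node o l r) (kl + kr) (Sl :|: Sr).
Proof.
move=> o_twin /feasibleP[sSl domSl [Xl [sXl <- [pl pml]]]].
move=> /feasibleP[sSr domSr [Xr [sXr <- [pr pmr]]]].
have dS : [disjoint Sl & Sr] := disjointW sSl sSr dlr.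
have XSl : Xl \subset Sl by apply: subset_trans sXl (subsetIl _ _).
have XSr : Xr \subset Sr by apply: subset_trans sXr (subsetIl _ _).
apply/feasibleP; split; first by rewrite hatV_node setUSS.
  by apply: dominates_twin;
    [|exact: dominatesS (subsetUl _ _) domSl|exact: dominatesS (subsetUr _ _) domSr].
exists (Xl :|: Xr); split.
- rewrite twins_twin // subUset.
  by rewrite (subset_trans sXl) ?(subset_trans sXr) // setISS ?subsetUl ?subsetUr.
- exact/cardsU_disjoint/(disjointW XSl XSr dS).
have -> : (Sl :|: Sr) :\: (Xl :|: Xr) = (Sl :\: Xl) :|: (Sr :\: Xr).
  apply/setP=> x; rewrite !inE; case/boolP: (x \in Sl) => xSl.
    have xSr : x \notin Sr by rewrite (disjointFr dS xSl).
    have xXr : x \notin Xr := contraNN (subsetP XSr x) xSr.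
    by rewrite (negbTE xSr) (negbTE xXr) /= !orbF !andbT.
  have xXl : x \notin Xl := contraNN (subsetP XSl x) xSl.
  by rewrite (negbTE xXl) /=.
eexists; apply: pm_involU.
- exact: disjointW (subsetDl _ _) (subsetDl _ _) dS.
- by apply: pm_invol_mono pml => x y _ _; apply: tedge_node_l.
- by apply: pm_invol_mono pmr => x y _ _; apply: tedge_node_r.
Qed.

Local Notation v := (Node OAttach l r).

Lemma tedge_attach_l x y : tedge v x y -> x \in hatV l -> y \in hatV l -> tedge l x y.
Proof.
case/or3P=> [// | /tedge_hatV/andP[xr _] xl _
            | /orP[]/andP[_ /(subsetP (twins_subset r)) yr] xl yl].
- by rewrite (disjointFr dlr xl) in xr.
- by rewrite (disjointFr dlr yl) in yr.
- by rewrite (disjointFr dlr xl) in yr.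
Qed.

Lemma tedge_attach_r x y : tedge v x y -> x \in hatV r -> y \in hatV r -> tedge r x y.
Proof.
case/or3P=> [/tedge_hatV/andP[xl _] xr _ | //
            | /orP[]/andP[/(subsetP (twins_subset l)) yl _] xr yr].
- by rewrite (disjointFr dlr xl) in xr.
- by rewrite (disjointFr dlr yl) in xr.
- by rewrite (disjointFr dlr yl) in yr.
Qed.

Lemma tedge_attach_lr x y : tedge v x y -> x \in hatV l -> y \in hatV r ->
  (x \in twins l) && (y \in twins r).
Proof.
case/or3P=> [/tedge_hatV/andP[_ yl] _ yr | /tedge_hatV/andP[xr _] xl _ | /orP[] // ].
- by rewrite (disjointFr dlr yl) in yr.
- by rewrite (disjointFr dlr xl) in xr.
by case/andP=> [/(subsetP (twins_subset l)) yl _] _ yr; rewrite (disjointFr dlr yl) in yr.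
Qed.

Lemma dominates_attach S x0 : dominates l S -> dominates r S ->
  x0 \in S -> x0 \in twins l -> dominates v S.
Proof.
move=> domSl domSr x0S x0T x; rewrite hatV_node in_setD in_setU => /andP[xTl /orP[xl|xr]].
  have /domSl[xS|[y yS xy]] : x \in hatV l :\: twins l by rewrite in_setD xTl.
    by left.
  by right; exists y; last exact: tedge_node_l.
case/boolP: (x \in twins r) => xTr.
  by right; exists x0 => //; rewrite /= x0T xTr !orbT.
have /domSr[xS|[y yS xy]] : x \in hatV r :\: twins r by rewrite in_setD xTr.
  by left.
by right; exists y; last exact: tedge_node_r.
Qed.

Lemma dominates_attach_l S : dominates v S -> dominates l (S :&: hatV l).
Proof.
move=> domS x /setDP[xl xTl].
have /domS[xS|[y yS xy]] : x \in hatV v :\: twins v by rewrite hatV_node in_setD in_setU xl /= xTl.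
  by left; rewrite in_setI xS.
have := tedge_hatV xy; rewrite hatV_node !in_setU => /andP[_ /orP[yl|yr]].
  by right; exists y; rewrite ?in_setI ?yS ?tedge_attach_l.
by have /andP[xTl' _] := tedge_attach_lr xy xl yr; rewrite xTl' in xTl.
Qed.

Lemma dominates_attach_r S : dominates v S -> dominates r (S :&: hatV r).
Proof.
move=> domS x /setDP[xr xTr].
have xTl : x \notin twins l.
  by apply: contraTN xr => /(subsetP (twins_subset l)) xl; rewrite (disjointFr dlr xl).
have /domS[xS|[y yS xy]] : x \in hatV v :\: twins v.
  by rewrite hatV_node in_setD in_setU xr orbT /= xTl.
  by left; rewrite in_setI xS.
have := tedge_hatV xy; rewrite hatV_node !in_setU => /andP[_ /orP[yl|yr]].
  by rewrite tedge_sym in xy; have /andP[_ xTr'] := tedge_attach_lr xy yl xr; rewrite xTr' in xTr.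
by right; exists y; rewrite ?in_setI ?yS ?tedge_attach_r.
Qed.

Lemma feasible_attach_split k S : feasible v k S ->
  exists c, feasible l (k + c) (S :&: hatV l) /\ feasible r c (S :&: hatV r).
Proof.
case/feasibleP=> sS domS [X [/subsetIP[XS XTl] <- [p pmp]]].
have XVl : X \subset hatV l := subset_trans XTl (twins_subset l).
have sSX : S :\: X \subset hatV l :|: hatV r.
  by rewrite -(hatV_node OAttach) (subset_trans (subsetDl _ _)).
set Y := [set y in (S :\: X) :&: hatV r | p y \in hatV l].
have YT y : y \in Y -> [/\ y \in S :\: X, y \in twins r, p y \in S :\: X & p y \in twins l].
  case/setIdP=> /setIP[yA yr] pyl; have [pyA _ _ ypy] := pmp y yA.
  rewrite tedge_sym in ypy; have /andP[pyT yT] := tedge_attach_lr ypy pyl yr.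
  by split.
exists #|Y|; split; apply/feasibleP; (split; first exact: subsetIr).
- exact: dominates_attach_l.
- exists (X :|: p @: Y); split.
  + apply/subsetP=> x /setUP[xX | /imsetP[y /YT[_ _ /setDP[pyS _] pyT] ->]].
      by rewrite !in_setI (subsetP XS) ?(subsetP XVl) ?(subsetP XTl).
    by rewrite !in_setI pyS pyT (subsetP (twins_subset l)).
  + rewrite cardsU_disjoint ?(card_pm_cross (hatV l) (hatV r) pmp) //.
    rewrite disjoint_subset; apply/subsetP=> x xX; rewrite !inE.
    by apply/imsetP=> -[y /YT[_ _ /setDP[_ pyX] _] xpy]; rewrite -xpy xX in pyX.
  + rewrite -setDDl -setIDAC (pm_cross_l pmp sSX dlr).
    by exists p; apply: pm_invol_restrict pmp => x y xl yl xy; apply: tedge_attach_l xy xl yl.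
- exact: dominates_attach_r.
- exists Y; split=> //.
    apply/subsetP=> y /[dup] /setIdP[/setIP[_ yr] _] /YT[/setDP[yS _] yT _ _].
    by rewrite !in_setI yS yr yT.
  have /setDidPl <- : [disjoint S :&: hatV r & X].
    by rewrite disjoint_sym (disjointW XVl (subsetIr _ _) dlr).
  rewrite -setIDAC (pm_cross_r pmp sSX dlr).
  by exists p; apply: pm_invol_restrict pmp => x y xr yr xy; apply: tedge_attach_r xy xr yr.
Qed.

Lemma feasible_attach_merge j c Sl Sr : c <= j -> 0 < j ->
  feasible l j Sl -> feasible r c Sr -> feasible v (j - c) (Sl :|: Sr).
Proof.
move=> le_cj j_gt0 /feasibleP[sSl domSl [Xl [/subsetIP[XSl XTl] cardXl [pl pml]]]].
move=> /feasibleP[sSr domSr [Y [/subsetIP[YSr YTr] cardY [pr pmr]]]].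
have dS : [disjoint Sl & Sr] := disjointW sSl sSr dlr.
have dYXl : [disjoint Y & Xl] by rewrite disjoint_sym (disjointW XSl YSr dS).
have leYXl : #|Y| <= #|Xl| by rewrite cardY cardXl.
have EYXl : {in Y & Xl, forall y x, tedge v y x}.
  by move=> y x yY xX; rewrite /= (subsetP XTl _ xX) (subsetP YTr _ yY) !orbT.
have [Z [ZXl cardZ] [q pmq]] := pm_invol_bipartite (tedge_sym v) dYXl leYXl EYXl.
have [x0 x0Xl] : exists x0, x0 \in Xl by apply/card_gt0P; rewrite cardXl.
apply/feasibleP; split; first by rewrite hatV_node setUSS.
  apply: (dominates_attach (x0 := x0)).
  - exact: dominatesS (subsetUl _ _) domSl.
  - exact: dominatesS (subsetUr _ _) domSr.
  - by rewrite in_setU (subsetP XSl).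
  - exact: (subsetP XTl).
exists (Xl :\: Z); split.
- by rewrite subsetI !(subset_trans (subsetDl _ _)) // ?subsetU ?XSl ?XTl.
- by rewrite cardsDS // cardXl cardZ cardY.
have notinY x : x \in Sl -> x \notin Y.
  by move=> xSl; apply: contraFN (disjointFr dS xSl); apply: (subsetP YSr).
have notinZ x : x \in Sr -> x \notin Z.
  by move=> xSr; apply: contraFN (disjointFl dS xSr) => /(subsetP ZXl)/(subsetP XSl).
have -> : (Sl :|: Sr) :\: (Xl :\: Z) = ((Sl :\: Xl) :|: (Sr :\: Y)) :|: (Y :|: Z).
  apply/setP=> x; rewrite !inE; case/boolP: (x \in Sl) => xSl.
    rewrite (disjointFr dS xSl) (negbTE (notinY x xSl)).
    by case: (x \in Z); case: (x \in Xl).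
  have xXl : x \notin Xl := contraNN (subsetP XSl x) xSl.
  rewrite (negbTE xXl) (contraNF (subsetP ZXl x) xXl) /=.
  by case/boolP: (x \in Y) => xY; rewrite ?(subsetP YSr _ xY) /= ?orbF.
eexists; apply: pm_involU; last exact: pmq; last apply: pm_involU.
- rewrite disjoint_subset; apply/subsetP=> x; rewrite !inE negb_or.
  case/orP=> /andP[xX xS]; first by rewrite notinY // (contraNN (subsetP ZXl x)).
  by rewrite xX notinZ.
- exact: disjointW (subsetDl _ _) (subsetDl _ _) dS.
- by apply: pm_invol_mono pml => x y _ _; apply: tedge_node_l.
- by apply: pm_invol_mono pmr => x y _ _; apply: tedge_node_r.
Qed.

Lemma gamma_attach_merge j c : c <= j -> 0 < j -> gamma v (j - c) <= gamma l j + gamma r c.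
Proof.
move=> le_cj j_gt0; have gamma_v_le := gamma_ub v (j - c).
case: (leqP (gamma l j) #|T|) => [/gamma_witness[Sl fSl <-] | lt_l]; last first.
  by rewrite (leq_trans gamma_v_le) // (leq_trans lt_l) ?leq_addr.
case: (leqP (gamma r c) #|T|) => [/gamma_witness[Sr fSr <-] | lt_r]; last first.
  by rewrite (leq_trans gamma_v_le) // (leq_trans lt_r) ?leq_addl.
exact: leq_trans (gamma_le (feasible_attach_merge le_cj j_gt0 fSl fSr)) (leq_card_setU _ _).
Qed.

Lemma gamma_attach_split k : gamma v k <= #|T| -> exists c,
  [/\ k + c <= Defs.tsize l, c <= Defs.tsize r & gamma l (k + c) + gamma r c <= gamma v k].
Proof.
case/gamma_witness=> S fS <-; have [c [fSl fSr]] := feasible_attach_split fS.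
exists c; split; [exact: feasible_le_tsize fSl | exact: feasible_le_tsize fSr |].
apply: leq_trans (leq_add (gamma_le fSl) (gamma_le fSr)) _.
rewrite -cardsU_disjoint ?subset_leq_card ?subUset ?subsetIl //.
exact: disjointW (subsetIr _ _) (subsetIr _ _) dlr.
Qed.

Lemma gamma_attach_pred_lt k : propP l -> propP r -> hbeta l < halpha r -> 0 < k ->
  gamma v k <= #|T| -> gamma v k.-1 < gamma v k.
Proof.
move=> Pl Pr lt_ba k_gt0 /gamma_attach_split[c [klc cr split_le]].
apply: leq_trans split_le; case: (ltnP c (halpha r)) => [lt_ca | le_ac].
  have lt_r : gamma r c.+1 < gamma r c.
    have [Prc _ _ _] := Pr c cr.
    have [Prc1 _ _ _] := Pr c.+1 (leq_trans lt_ca (halpha_le_tsize r)).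
    rewrite Prc1 // Prc ?(ltnW lt_ca) //; lia.
  have -> : k.-1 = k + c - c.+1 by lia.
  apply: leq_ltn_trans (gamma_attach_merge _ _) _; rewrite ?ltn_add2l //; lia.
have lt_l : gamma l (k + c).-1 < gamma l (k + c).
  have [_ Plk _ _] := Pl (k + c) klc.
  have [_ Plk1 _ _] := Pl (k + c).-1 (leq_trans (leq_pred _) klc).
  rewrite Plk ?Plk1; lia.
have -> : k.-1 = (k + c).-1 - c by lia.
apply: leq_ltn_trans (gamma_attach_merge _ _) _; rewrite ?ltn_add2r //; lia.
Qed.

End Children.

Lemma dominates_leaf x S : dominates (Leaf x) S.
Proof. by move=> y; rewrite !inE andNb. Qed.

(* 1-feasible sets are needed for the left child of an attachment node. *)
Lemma exists_feasible_le1 t k : uniq (leaves t) -> k <= 1 -> exists S, feasible t k S.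
Proof.
elim: t k => [x|o l IHl r IHr] k.
  move=> _; case: k => [|[|//]] _.
    exists set0; apply/feasibleP; split; [exact: sub0set | exact: dominates_leaf |].
    by exists set0; split; rewrite ?sub0set ?cards0 //; exists id; rewrite setD0; apply: pm_invol0.
  exists [set x]; apply/feasibleP; split; [by rewrite sub1set !inE | exact: dominates_leaf |].
  by exists [set x]; split; rewrite ?setIid ?cards1 //; exists id; rewrite setDv; apply: pm_invol0.
case/uniq_node=> ul ur dlr k_le1; case: o; last first.
  have [Sl fSl] := IHl 1 ul isT; have [Sr fSr] := IHr (1 - k) ur (leq_subr _ _).
  exists (Sl :|: Sr); rewrite -[k](subKn k_le1).
  exact: (feasible_attach_merge dlr (leq_subr _ _)).
all: have [Sl fSl] := IHl k ul k_le1; have [Sr fSr] := IHr 0 ur isT.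
all: by exists (Sl :|: Sr); rewrite -[k]addn0; apply: (feasible_twin dlr).
Qed.

Lemma hmin_le_card t : uniq (leaves t) -> hmin t <= #|T|.
Proof.
move=> uniq_t; have [S fS] := exists_feasible_le1 uniq_t (leq0n 1).
exact: leq_trans (hmin_le_gamma (leq0n _)) (leq_trans (gamma_le fS) (max_card _)).
Qed.

Lemma hbeta_eq0 t : hmin t <= #|T| ->
  (forall k, 0 < k -> gamma t k <= #|T| -> gamma t k.-1 < gamma t k) -> hbeta t = 0.
Proof.
move=> hmin_le gamma_lt; apply/eqP; rewrite -leqn0; apply/bigmax_leqP=> k /eqP gamma_k_min.
case: (posnP k) => [-> // | k_gt0].
have le_k_tsize : k.-1 <= Defs.tsize t by rewrite (leq_trans (leq_pred k)) // -ltnS.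
have := gamma_lt k k_gt0; rewrite gamma_k_min => /(_ hmin_le) lt_min.
by have := leq_ltn_trans (hmin_le_gamma le_k_tsize) lt_min; rewrite ltnn.
Qed.

End DecompositionTrees.

Theorem lemma40 (T : finType) (e : rel T) (t vl vr : dtree T) :
  symmetric e -> irreflexive e -> distance_hereditary e ->
  decomp_tree e t ->
  subtree (Node OAttach vl vr) t ->
  propP vl -> propP vr ->
  hbeta vl < halpha vr ->
  hbeta (Node OAttach vl vr) = 0.
Proof.
move=> _ _ _ [uniq_t _ _] sub_t Pl Pr lt_ba.
have uniq_v := uniq_subtree sub_t uniq_t; have /uniq_node[_ _ dlr] := uniq_v.
apply: hbeta_eq0 (hmin_le_card uniq_v) _ => k.
exact: gamma_attach_pred_lt dlr k Pl Pr lt_ba.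
Qed.
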